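(* There is no graph class $\mathcal{F}$ such that, for all graphs $G$ and $H$, any one of the following holds: (1) $G\equiv_{\mathcal{F}}H$ iff $a(G)=a(H)$, where $a$ denotes the order of the automorphism group; (2) $G\equiv_{\mathcal{F}}H$ iff $\alpha(G)=\alpha(H)$, where $\alpha$ is the size of a largest independent set; (3) $G\equiv_{\mathcal{F}}H$ iff $\omega(G)=\omega(H)$, where $\omega$ is the size of a largest clique; (4) $G\equiv_{\mathcal{F}}H$ iff $\chi(G)=\chi(H)$, where $\chi$ is the chromatic number.
   Context: All graphs are finite, undirected, without multiple edges. $\hom(F,G)$ counts homomorphisms $F\to G$; $G\equiv_{\mathcal{F}}H$ means $\hom(F,G)=\hom(F,H)$ for all $F\in\mathcal{F}$. *)

From mathcomp Require Import all_boot perm.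
Set Implicit Arguments. Unset Strict Implicit. Unset Printing Implicit Defensive.

Record graph := Graph {
  gn : nat;
  gadj : rel 'I_gn;
  gsym : symmetric gadj;
  girr : irreflexive gadj }.
Arguments gadj : clear implicits.

Definition hom (F G : graph) : nat :=
  #|[pred f : {ffun 'I_(gn F) -> 'I_(gn G)} |
     [forall x, forall y, gadj F x y ==> gadj G (f x) (f y)]]|.

Definition hom_equiv (C : graph -> Prop) (G H : graph) : Prop :=
  forall F, C F -> hom F G = hom F H.

Definition aut (G : graph) : nat :=
  #|[pred p : {perm 'I_(gn G)} |
     [forall x, forall y, gadj G (p x) (p y) == gadj G x y]]|.

Definition independent (G : graph) (S : {set 'I_(gn G)}) : bool :=
  [forall x in S, forall y in S, ~~ gadj G x y].
Definition clique (G : graph) (S : {set 'I_(gn G)}) : bool :=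
  [forall x in S, forall y in S, (x != y) ==> gadj G x y].

Definition alpha (G : graph) : nat :=
  \max_(S : {set 'I_(gn G)} | independent S) #|S|.
Definition omega (G : graph) : nat :=
  \max_(S : {set 'I_(gn G)} | clique S) #|S|.

Definition colorable (G : graph) (k : nat) : bool :=
  [exists c : {ffun 'I_(gn G) -> 'I_k},
     [forall x, forall y, gadj G x y ==> (c x != c y)]].

Lemma colorable_n (G : graph) : colorable G (gn G).
Proof.
apply/existsP; exists [ffun x => x]; apply/forallP => x; apply/forallP => y.
apply/implyP => Hxy; rewrite !ffunE; apply/eqP => Exy.
by move: Hxy; rewrite Exy girr.
Qed.

Definition chi (G : graph) : nat := ex_minn (ex_intro (fun k => colorable G k) _ (colorable_n G)).

From mathcomp Require Import all_boot perm.
Set Implicit Arguments. Unset Strict Implicit. Unset Printing Implicit Defensive.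

(* If [≡_C] coincided with equality of a graph invariant [ι], then for every
   [F ∈ C] the number [hom F G] would be determined by [ι G]. For each of the
   four invariants this fails for every [F] with [n ≥ 1] vertices: [K_n] and
   the edgeless graph on [n] vertices both have [n!] automorphisms, but only
   the first receives homomorphisms from [F] if [F] has an edge (otherwise
   compare the edgeless graphs on 0 and 1 vertices); [K_n] and [K_(n+1)] both
   have independence number 1; [K_n] and two disjoint copies of [K_n] both have
   clique and chromatic number [n]. In the last two pairs the first graph embeds
   into the second, and some homomorphism from [F] into the second misses the
   image. So [C] only contains the graph without vertices, [≡_C] relates all
   graphs, and [ι] would be constant. *)

Definition is_hom (F G : graph) (f : 'I_(gn F) -> 'I_(gn G)) : bool :=
  [forall x, forall y, gadj F x y ==> gadj G (f x) (f y)].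

Lemma is_homP F G (f : 'I_(gn F) -> 'I_(gn G)) :
  reflect (forall x y, gadj F x y -> gadj G (f x) (f y)) (is_hom f).
Proof.
apply: (iffP forallP) => [fH x y | fH x]; first by have /forallP/(_ y)/implyP := fH x.
by apply/forallP => y; apply/implyP/fH.
Qed.

Lemma homE F G : hom F G = #|[set f : {ffun 'I_(gn F) -> 'I_(gn G)} | is_hom f]|.
Proof. by rewrite cardsE. Qed.

Lemma adj_neq G (x y : 'I_(gn G)) : gadj G x y -> x != y.
Proof. by apply: contraTneq => ->; rewrite girr. Qed.

Lemma hom_gt0 F G (f : 'I_(gn F) -> 'I_(gn G)) : is_hom f -> 0 < hom F G.
Proof.
move=> /is_homP fH; rewrite homE; apply/card_gt0P; exists [ffun x => f x].
by rewrite inE; apply/is_homP => x y /fH; rewrite !ffunE.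
Qed.

Lemma hom_eq0 F G : (forall f : 'I_(gn F) -> 'I_(gn G), ~~ is_hom f) -> hom F G = 0.
Proof.
move=> noH; rewrite homE; apply/eqP; rewrite cards_eq0; apply/eqP/setP => f.
rewrite !inE; apply/negbTE; exact: noH.
Qed.

Lemma hom_from_empty F G : gn F = 0 -> hom F G = 1.
Proof.
case: F => n adj ? ? /= n0; subst n; rewrite /hom /=.
rewrite (eq_card (B := predT)) ?card_ffun ?card_ord // => f.
by rewrite !inE; apply/forallP => -[].
Qed.

(* Composition with an injective homomorphism [phi : G -> H] embeds the
   homomorphisms [F -> G] into those [F -> H], and [g] is not in the image. *)
Lemma hom_ltn F G H (phi : 'I_(gn G) -> 'I_(gn H)) (g : 'I_(gn F) -> 'I_(gn H)) x0 :
  injective phi -> is_hom phi -> is_hom g -> (forall y, phi y != g x0) ->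
  hom F G < hom F H.
Proof.
move=> phi_inj /is_homP phiH /is_homP gH g_out; rewrite !homE.
pose comp (f : {ffun 'I_(gn F) -> 'I_(gn G)}) := [ffun x => phi (f x)].
have comp_inj : injective comp.
  move=> f1 f2 E; apply/ffunP => x; apply: phi_inj.
  by move/ffunP: E => /(_ x); rewrite !ffunE.
rewrite -(card_imset _ comp_inj); apply: proper_card; apply/properP; split.
  apply/subsetP => h /imsetP[f]; rewrite inE => /is_homP fH ->.
  by rewrite inE; apply/is_homP => x y /fH; rewrite !ffunE => /phiH.
exists [ffun x => g x].
  by rewrite inE; apply/is_homP => x y /gH; rewrite !ffunE.
apply/imsetP => -[f _ /ffunP/(_ x0)]; rewrite !ffunE => /eqP.
by rewrite eq_sym (negPf (g_out _)).
Qed.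

Definition hom_separated (inv : graph -> nat) (F : graph) : Prop :=
  exists G H, inv G = inv H /\ hom F G <> hom F H.

Lemma hom_equiv_inv_constant (inv : graph -> nat) C :
  (forall G H, hom_equiv C G H <-> inv G = inv H) ->
  (forall F, 0 < gn F -> hom_separated inv F) ->
  forall G H, inv G = inv H.
Proof.
move=> equivE sep G H; apply/equivE => F CF.
have [F0|Fpos] := posnP (gn F); first by rewrite !hom_from_empty.
have [G' [H' [invE homN]]] := sep F Fpos.
by case: homN; apply: (proj2 (equivE G' H')).
Qed.

Section ExampleGraphs.

Variable n : nat.

Definition complete : graph :=
  @Graph n (fun x y => x != y) (fun x y => congr1 negb (eq_sym x y))
    (fun x => congr1 negb (eqxx x)).

Definition edgeless : graph :=
  @Graph n (fun _ _ => false) (fun _ _ => erefl) (fun _ => erefl).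

(* Two disjoint copies of [complete]: [x] and [y] are in the same copy iff
   they have the same quotient by [n]. *)
Definition two_cliques : graph.
Proof.
refine (@Graph (n + n) (fun x y => (x != y) && (x %/ n == y %/ n)) _ _).
- by move=> x y; rewrite eq_sym [_ %/ n == _]eq_sym.
- by move=> x; rewrite eqxx.
Defined.

Lemma is_hom_complete F (f : 'I_(gn F) -> 'I_n) : injective f -> @is_hom F complete f.
Proof. by move=> f_inj; apply/is_homP => x y /adj_neq; rewrite /= (inj_eq f_inj). Qed.

Lemma aut_complete : aut complete = n`!.
Proof.
rewrite /aut -card_Sn; apply: eq_card => p; rewrite !inE.
by apply/forallP => x; apply/forallP => y; rewrite /= (inj_eq perm_inj).
Qed.

Lemma aut_edgeless : aut edgeless = n`!.
Proof.
rewrite /aut -card_Sn; apply: eq_card => p; rewrite !inE.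
by apply/forallP => x; apply/forallP => y.
Qed.

Lemma alpha_complete : 0 < n -> alpha complete = 1.
Proof.
move=> n_gt0; apply/eqP; rewrite eqn_leq; apply/andP; split.
  apply/bigmax_leqP => S /forallP S_ind; apply/card_le1_eqP => x y xS yS.
  by have /implyP/(_ xS)/forallP/(_ y)/implyP/(_ yS)/negbNE/eqP := S_ind x.
rewrite -(cards1 (Ordinal n_gt0 : 'I_(gn complete))); apply: leq_bigmax_cond.
by apply/forallP => x; apply/implyP; rewrite inE => /eqP ->; apply/forallP => y;
   apply/implyP; rewrite inE => /eqP ->; rewrite girr.
Qed.

Lemma clique_complete : clique [set: 'I_(gn complete)].
Proof.
by apply/forallP => x; apply/implyP => _; apply/forallP => y; apply/implyP => _;
   apply/implyP.
Qed.

Lemma lshift_in_two_cliques : @is_hom complete two_cliques (lshift n).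
Proof.
apply/is_homP => x y /= xy; rewrite (inj_eq (@lshift_inj _ _)) xy.
by rewrite !divn_small.
Qed.

Lemma colorable_two_cliques : 0 < n -> colorable two_cliques n.
Proof.
move=> n_gt0; apply/existsP; exists [ffun x : 'I_(n + n) => Ordinal (ltn_pmod x n_gt0)].
apply/forallP => x; apply/forallP => y; apply/implyP => /andP[xy /eqP div_xy].
rewrite !ffunE; apply: contra xy => /eqP/(congr1 val) /= mod_xy.
by apply/eqP/val_inj; rewrite [val x](divn_eq x n) [val y](divn_eq y n) div_xy mod_xy.
Qed.

End ExampleGraphs.

Lemma alpha_leq_order G : alpha G <= gn G.
Proof.
by apply/bigmax_leqP => S _; apply: leq_trans (max_card _) _; rewrite card_ord.
Qed.

Section CliquesAndColourings.

Variable G : graph.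

(* A proper colouring is injective on a clique. *)
Lemma clique_card_leq_colorable (S : {set 'I_(gn G)}) k :
  clique S -> colorable G k -> #|S| <= k.
Proof.
move=> /forallP S_clique /existsP[c /forallP c_proper].
have c_inj : {in S &, injective c}.
  move=> x y xS yS cxy; apply/eqP; apply: contraT => xy.
  have /implyP/(_ xS)/forallP/(_ y)/implyP/(_ yS)/implyP/(_ xy) := S_clique x.
  by have /forallP/(_ y)/implyP H := c_proper x; move/H; rewrite cxy eqxx.
rewrite -(card_in_imset c_inj).
by apply: leq_trans (max_card _) _; rewrite card_ord.
Qed.

Lemma colorable_chi : colorable G (chi G).
Proof. by rewrite /chi; case: ex_minnP. Qed.

Lemma chi_leq k : colorable G k -> chi G <= k.
Proof. by rewrite /chi; case: ex_minnP => m _; apply. Qed.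

Lemma clique_chi_omega (S : {set 'I_(gn G)}) :
  clique S -> colorable G #|S| -> chi G = #|S| /\ omega G = #|S|.
Proof.
move=> S_clique S_col; split; apply/eqP; rewrite eqn_leq.
  by rewrite chi_leq // (clique_card_leq_colorable S_clique colorable_chi).
rewrite leq_bigmax_cond // andbT.
by apply/bigmax_leqP => T /clique_card_leq_colorable; apply.
Qed.

End CliquesAndColourings.

Lemma chi_omega_complete n : chi (complete n) = n /\ omega (complete n) = n.
Proof.
have := clique_chi_omega (clique_complete n); rewrite cardsT card_ord.
by apply; apply: colorable_n.
Qed.

Lemma chi_omega_two_cliques n :
  0 < n -> chi (two_cliques n) = n /\ omega (two_cliques n) = n.
Proof.
move=> n_gt0; set S := lshift n @: [set: 'I_n].
have S_card : #|S| = n by rewrite card_imset ?cardsT ?card_ord //; apply: lshift_inj.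
have S_clique : @clique (two_cliques n) S.
  have /is_homP lshiftH := lshift_in_two_cliques n.
  apply/forallP => u; apply/implyP => /imsetP[x _ ->].
  apply/forallP => v; apply/implyP => /imsetP[y _ ->].
  by apply/implyP => xy; apply: lshiftH; apply: contra xy => /eqP ->.
have := clique_chi_omega S_clique; rewrite S_card; apply.
exact: colorable_two_cliques.
Qed.

Lemma rshift_in_two_cliques F : @is_hom F (two_cliques (gn F)) (@rshift (gn F) (gn F)).
Proof.
apply/is_homP => x y /adj_neq xy /=; rewrite (inj_eq (@rshift_inj _ _)) xy.
by rewrite /= !divnDl ?dvdnn // !(divn_small (ltn_ord _)).
Qed.

Lemma hom_ltn_complete_two_cliques F :
  0 < gn F -> hom F (complete (gn F)) < hom F (two_cliques (gn F)).
Proof.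
move=> F_gt0.
apply: (@hom_ltn F (complete (gn F)) (two_cliques (gn F)) _ _ (Ordinal F_gt0)
  (@lshift_inj _ _) (lshift_in_two_cliques _) (rshift_in_two_cliques F)) => y.
apply/eqP => /(congr1 val) /= yE.
by have := ltn_ord y; rewrite yE ltnNge leq_addr.
Qed.

Lemma hom_separated_aut F : 0 < gn F -> hom_separated aut F.
Proof.
move=> F_gt0; have [/existsP[x /existsP[y xy]] | no_edge] :=
  boolP [exists x, exists y, gadj F x y].
  exists (complete (gn F)), (edgeless (gn F)); rewrite aut_complete aut_edgeless.
  split=> //; rewrite (@hom_eq0 F (edgeless _)) => [|f].
    by apply/eqP; rewrite -lt0n (hom_gt0 (@is_hom_complete (gn F) F id (@inj_id _))).
  by apply/negP => /is_homP/(_ x y xy).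
exists (edgeless 0), (edgeless 1); rewrite !aut_edgeless; split=> //.
rewrite hom_eq0 => [|f]; last by case: (f (Ordinal F_gt0)).
apply/eqP; rewrite eq_sym -lt0n; apply: (@hom_gt0 F (edgeless 1) (fun=> ord0)).
apply/is_homP => a b ab; case/negP: no_edge.
by apply/existsP; exists a; apply/existsP; exists b.
Qed.

Lemma hom_separated_alpha F : 0 < gn F -> hom_separated alpha F.
Proof.
move=> F_gt0; exists (complete (gn F)), (complete (gn F).+1).
rewrite !alpha_complete //; split=> //; apply/eqP; rewrite neq_ltn; apply/orP; left.
apply: (@hom_ltn F (complete (gn F)) (complete (gn F).+1) (lift ord0)
  (widen_ord (leqnSn _)) (Ordinal F_gt0) (@lift_inj _ ord0)).
- exact/is_hom_complete/lift_inj.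
- by apply: (@is_hom_complete (gn F).+1 F) => x y /(congr1 val) /= /val_inj.
- move=> y; have -> : widen_ord (leqnSn _) (Ordinal F_gt0) = ord0 by exact: val_inj.
  by rewrite eq_sym neq_lift.
Qed.

Lemma hom_separated_omega F : 0 < gn F -> hom_separated omega F.
Proof.
move=> F_gt0; exists (complete (gn F)), (two_cliques (gn F)).
rewrite (chi_omega_complete _).2 (chi_omega_two_cliques F_gt0).2; split=> //.
by apply/eqP; rewrite neq_ltn hom_ltn_complete_two_cliques.
Qed.

Lemma hom_separated_chi F : 0 < gn F -> hom_separated chi F.
Proof.
move=> F_gt0; exists (complete (gn F)), (two_cliques (gn F)).
rewrite (chi_omega_complete _).1 (chi_omega_two_cliques F_gt0).1; split=> //.
by apply/eqP; rewrite neq_ltn hom_ltn_complete_two_cliques.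
Qed.

Theorem corollary20 :
  ~ exists C : graph -> Prop,
      (forall G H : graph, hom_equiv C G H <-> aut G = aut H) \/
      (forall G H : graph, hom_equiv C G H <-> alpha G = alpha H) \/
      (forall G H : graph, hom_equiv C G H <-> omega G = omega H) \/
      (forall G H : graph, hom_equiv C G H <-> chi G = chi H).
Proof.
case=> C [equivE|[equivE|[equivE|equivE]]].
- have := hom_equiv_inv_constant equivE hom_separated_aut (edgeless 1) (edgeless 2).
  by rewrite !aut_edgeless.
- have := hom_equiv_inv_constant equivE hom_separated_alpha (complete 0) (complete 1).
  have := alpha_leq_order (complete 0).
  by rewrite leqn0 (@alpha_complete 1) // => /eqP ->.
- have := hom_equiv_inv_constant equivE hom_separated_omega (complete 1) (complete 2).
  by rewrite !(chi_omega_complete _).2.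
- have := hom_equiv_inv_constant equivE hom_separated_chi (complete 1) (complete 2).
  by rewrite !(chi_omega_complete _).1.
Qed.
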